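(* Let $G$ be a finite simple graph with a perfect matching $M$, and let $\mathcal{C}$ be an optimal edge $2$-colouring of $G$. For an edge $e$ write $\mathrm{cl}(e)$ for its colour, and for a vertex $u$ write $\mathrm{mcl}(u)$ for the colour of the unique edge of $M$ incident with $u$. Let $u_0u_1\cdots u_k$ ($k\ge 1$) be a path in $G\setminus M$ such that $\mathrm{mcl}(u_0)=\mathrm{cl}(u_0u_1)$ and $\mathrm{mcl}(u_k)=\mathrm{cl}(u_{k-1}u_k)$. Then there exist indices $0\le i<j\le k$ such that $\mathrm{mcl}(u_i)=\mathrm{mcl}(u_j)$.
   Context: $G\setminus M$ is the spanning subgraph of $G$ with edge set $E(G)\setminus M$. An edge $2$-colouring is an assignment of colours to edges (not necessarily proper) such that at each vertex the incident edges carry at most $2$ distinct colours; it is optimal if it uses the maximum possible number of colours. *)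

From mathcomp Require Import all_boot.
Set Implicit Arguments. Unset Strict Implicit. Unset Printing Implicit Defensive.

Definition simple_graph (V : finType) (E : {set {set V}}) : Prop :=
  forall e, e \in E -> #|e| = 2.

Definition perfect_matching (V : finType) (E M : {set {set V}}) : Prop :=
  M \subset E /\ forall v : V, #|[set e in M | v \in e]| = 1.

(* An edge colouring is a map c from edges to colours (natural numbers);
   its values on non-edges are irrelevant. *)
Definition colours_at (V : finType) (E : {set {set V}}) (c : {set V} -> nat)
  (v : V) : seq nat := undup (map c [seq e <- enum E | v \in (e : {set V})]).

Definition edge_2colouring (V : finType) (E : {set {set V}})
  (c : {set V} -> nat) : Prop :=
  forall v : V, size (colours_at E c v) <= 2.

Definition ncolours (V : finType) (E : {set {set V}}) (c : {set V} -> nat)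
  : nat := size (undup [seq c e | e <- enum E]).

Definition optimal_2colouring (V : finType) (E : {set {set V}})
  (c : {set V} -> nat) : Prop :=
  edge_2colouring E c /\
  forall c' : {set V} -> nat, edge_2colouring E c' -> ncolours E c' <= ncolours E c.

Definition mcl (V : finType) (M : {set {set V}}) (c : {set V} -> nat) (u : V)
  : nat :=
  match [pick e in M | u \in e] with Some e => c e | None => 0 end.

From mathcomp Require Import all_boot.

Set Implicit Arguments.
Unset Strict Implicit.
Unset Printing Implicit Defensive.

(* If the colours mcl(u_0), ..., mcl(u_k) are pairwise distinct, then by
   induction every path edge u_i u_(i+1) carries a colour mcl(u_j) with j <= i:
   at u_(i+1) the incoming colour mcl(u_j) and mcl(u_(i+1)) are already two
   distinct colours, so the outgoing edge must reuse one of them.  For the last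
   edge this contradicts mcl(u_k) = cl(u_(k-1) u_k). *)

Section ColoursAt.

Variables (V : finType) (E : {set {set V}}) (c : {set V} -> nat).

Lemma mem_colours_at v e : e \in E -> v \in e -> c e \in colours_at E c v.
Proof.
move=> eE ve; rewrite /colours_at mem_undup; apply: map_f.
by rewrite mem_filter ve mem_enum.
Qed.

Lemma edge_2colouring_colours_at v a b d :
  edge_2colouring E c -> a != b ->
  a \in colours_at E c v -> b \in colours_at E c v -> d \in colours_at E c v ->
  d \in [:: a; b].
Proof.
move=> col2 ab av bv dv; apply: contraTT (col2 v) => dab.
have uniq_abd : uniq [:: d; a; b] by rewrite /= dab inE ab.
rewrite -ltnNge (uniq_leq_size uniq_abd) // => x.
by rewrite !inE => /or3P[] /eqP ->.
Qed.

Lemma mcl_colours_at M v :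
  perfect_matching E M -> mcl M c v \in colours_at E c v.
Proof.
move=> [sME Mv]; rewrite /mcl; case: pickP => [e /andP[eM ve] | noM].
  exact: mem_colours_at (subsetP sME e eM) ve.
have : 0 < #|[set e in M | v \in e]| by rewrite Mv.
by rewrite card_gt0 => /set0Pn[e]; rewrite inE noM.
Qed.

End ColoursAt.

Section MatchingColoursAlongPath.

Variables (V : finType) (E M : {set {set V}}) (c : {set V} -> nat).
Variables (k : nat) (u : nat -> V).

Hypothesis matchingM : perfect_matching E M.
Hypothesis colouring2 : edge_2colouring E c.
Hypothesis path_edges : forall i, i < k -> [set u i; u i.+1] \in E.
Hypothesis mcl_start : mcl M c (u 0) = c [set u 0; u 1].

Definition mcl_repeats n :=
  exists i j, i < j <= n /\ mcl M c (u i) = mcl M c (u j).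

Lemma path_edge_colour_mcl n : n < k ->
  mcl_repeats n.+1 \/ exists2 j, j <= n & c [set u n; u n.+1] = mcl M c (u j).
Proof.
elim: n => [_ | n IH ltnk]; first by right; exists 0.
case: (IH (ltnW ltnk)) => [[i [j [ij eqij]]] | [j jn colj]].
  left; exists i, j; split=> //; move: ij => /andP[-> /leqW //].
have [eqj | neqj] := eqVneq (mcl M c (u j)) (mcl M c (u n.+1)).
  by left; exists j, n.+1; rewrite ltnS jn leqnSn.
have in_v : c [set u n; u n.+1] \in colours_at E c (u n.+1).
  by apply: mem_colours_at (path_edges (ltnW ltnk)) _; rewrite !inE eqxx orbT.
have out_v : c [set u n.+1; u n.+2] \in colours_at E c (u n.+1).
  by apply: mem_colours_at (path_edges ltnk) _; rewrite !inE eqxx.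
rewrite colj in in_v.
have := edge_2colouring_colours_at colouring2 neqj in_v
  (mcl_colours_at c (u n.+1) matchingM) out_v.
by rewrite !inE => /orP[] /eqP ->; right; [exists j; rewrite ?leqW | exists n.+1].
Qed.

End MatchingColoursAlongPath.

Theorem lemma1 (V : finType) (E M : {set {set V}}) (c : {set V} -> nat)
  (k : nat) (u : nat -> V) :
  simple_graph E ->
  perfect_matching E M ->
  optimal_2colouring E c ->
  1 <= k ->
  (* u_0 ... u_k are distinct vertices *)
  (forall i j, i <= k -> j <= k -> u i = u j -> i = j) ->
  (* consecutive vertices are adjacent in G \ M *)
  (forall i, i < k -> [set u i; u i.+1] \in E :\: M) ->
  mcl M c (u 0) = c [set u 0; u 1] ->
  mcl M c (u k) = c [set u k.-1; u k] ->
  exists i j, i < j <= k /\ mcl M c (u i) = mcl M c (u j).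
Proof.
move=> _ matchingM [colouring2 _] k_gt0 _ path_edgesM mcl_start mcl_end.
have path_edges i : i < k -> [set u i; u i.+1] \in E.
  by move/path_edgesM; rewrite inE => /andP[].
have last_lt : k.-1 < k by rewrite prednK.
case: (path_edge_colour_mcl matchingM colouring2 path_edges mcl_start last_lt).
  by rewrite prednK.
rewrite prednK // => -[j jk colj]; exists j, k.
by rewrite -ltnS prednK // in jk; rewrite jk leqnn mcl_end colj.
Qed.
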